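(* Let $3\le k\le n-1$ and $1\le h\le n-k$. Let $S$ be a minimum $h$-cut of $S_{n,k}$ (so $|S|=\kappa_s^{(h)}(S_{n,k})$) and let $X$ be the vertex set of a connected component of $S_{n,k}-S$. Fix $t\in\{2,\dots,k\}$, and for $i\in I_n$ let $Y=V(S_{n,k})\setminus(S\cup X)$, $X_i=X\cap V(S^{t:i}_{n-1,k-1})$, $Y_i=Y\cap V(S^{t:i}_{n-1,k-1})$, $S_i=S\cap V(S^{t:i}_{n-1,k-1})$, and $J=\{i\in I_n: X_i\ne\emptyset\}$, $J'=\{i\in J: Y_i\ne\emptyset\}$, $T=\{i\in I_n: Y_i\ne\emptyset\}$. Then: (a) for every $i\in J'$, $S_i$ is an $(h-1)$-cut of $S^{t:i}_{n-1,k-1}$ (viewed as a copy of $S_{n-1,k-1}$); (b) $\kappa_s^{(h)}(S_{n,k})\ge |J'|\,\kappa_s^{(h-1)}(S_{n-1,k-1})$; (c) $J\cup T=I_n$.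
   Context: For integers $1\le k\le n-1$, let $I_n=\{1,\dots,n\}$ and $P(n,k)$ the set of $k$-permutations $p_1p_2\cdots p_k$ of distinct elements of $I_n$. The $(n,k)$-star graph $S_{n,k}$ has vertex set $P(n,k)$; a vertex $p=p_1p_2\cdots p_k$ is adjacent to (a) each vertex obtained by swapping $p_1$ with $p_i$ for $2\le i\le k$, and (b) each vertex $\alpha p_2\cdots p_k$ with $\alpha\in I_n\setminus\{p_1,\dots,p_k\}$. For $2\le t\le k$ and $i\in I_n$, $S^{t:i}_{n-1,k-1}$ is the subgraph of $S_{n,k}$ induced by all vertices whose $t$-th entry equals $i$; it is isomorphic to $S_{n-1,k-1}$, and each of its vertices has exactly one neighbor outside it. For a connected graph $G$ and integer $h\ge 0$, a set $S\subseteq V(G)$ is an $h$-cut if $G-S$ is disconnected and has minimum degree at least $h$; $\kappa_s^{(h)}(G)$ is the minimum cardinality of an $h$-cut of $G$. *)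

From mathcomp Require Import all_boot.
Set Implicit Arguments. Unset Strict Implicit. Unset Printing Implicit Defensive.

Section Graphs.
Variables (T : finType) (e : rel T).

Definition restr (A : {set T}) : rel T :=
  [rel x y | [&& x \in A, y \in A & e x y]].

Definition disconnected_on (A : {set T}) : bool :=
  [exists x, exists y, [&& x \in A, y \in A & ~~ connect (restr A) x y]].

Definition deg_in (A : {set T}) (x : T) : nat := #|[set y in A | e x y]|.

Definition mindeg_ge (A : {set T}) (h : nat) : bool :=
  [forall x in A, h <= deg_in A x].

Definition hcut (U S : {set T}) (h : nat) : bool :=
  [&& S \subset U, disconnected_on (U :\: S) & mindeg_ge (U :\: S) h].

Definition min_hcut (S : {set T}) (h : nat) : Prop :=
  hcut setT S h /\ forall S', hcut setT S' h -> #|S| <= #|S'|.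

(* kappa_s^(h)(G): minimum cardinality of an h-cut of G
   (junk value 0 if G has no h-cut) *)
Definition kappa_s (h : nat) : nat :=
  match [pick S : {set T} | hcut setT S h ] with
  | Some S0 => #|[arg min_(S < S0 | hcut setT S h) #|S|]|
  | None => 0
  end.

Definition component_of (A X : {set T}) : Prop :=
  exists2 x, x \in A & X = [set y in A | connect (restr A) x y].

End Graphs.

(* Vertices: k-permutations of I_n, encoded as duplicate-free k-tuples over
   'I_n (so I_n = {1..n} is relabelled {0..n-1}; positions 1..k of the paper
   are seq positions 0..k-1). *)
Definition kperm (n k : nat) := {t : k.-tuple 'I_n | uniq t}.

Definition kseq n k (p : kperm n k) : seq nat := map val (val p).

(* q is obtained from p by swapping p_1 with p_i, 2 <= i <= k *)
Definition swap_adj (k : nat) (ps qs : seq nat) : bool :=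
  [exists i : 'I_k, (0 < i) &&
     [forall j : 'I_k, nth 0 qs j ==
         nth 0 ps (if val j == 0 then val i else if j == i then 0 else val j)]].

(* q = alpha p_2 ... p_k with alpha not in {p_1,...,p_k} *)
Definition ext_adj (ps qs : seq nat) : bool :=
  (behead qs == behead ps) && (head 0 qs \notin ps).

Definition star_rel (n k : nat) : rel (kperm n k) :=
  fun p q => swap_adj k (kseq p) (kseq q) || ext_adj (kseq p) (kseq q).

(* vertex set of S^{t:i}_{n-1,k-1}: t-th entry (paper's 1-based t) equals i *)
Definition sub_star (n k t : nat) (i : 'I_n) : {set kperm n k} :=
  [set p | nth 0 (kseq p) t.-1 == val i].

From mathcomp Require Import all_boot fingroup perm zify.
Set Implicit Arguments. Unset Strict Implicit. Unset Printing Implicit Defensive.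

(* Vertices are handled through their entries
   (positions 0..k-1), and the neighbours of p are described uniformly as
   the vertices nbr c p obtained by making a value c != p_0 the first entry.

   - General graph facts: kappa_s is attained by a minimum cut and bounded by
     any cut; an h-cut of G[U] pulls back along an isomorphism G' ~ G[U] to an
     h-cut of G' no larger (kappa_le_iso); and if every vertex of U has at
     most one neighbour outside U while both a component X of G - S and the
     rest of G - S meet U, then S :&: U is an (h-1)-cut of G[U]
     (component_cut).  This gives (a) since sub-stars have this property.
   - psi, inserting a fixed value at a fixed position, is an isomorphism from
     S_{n-1,k-1} onto each sub-star; with kappa_le_iso and the partition of
     S by sub-stars this gives (b).
   - For (c), a sub-star contained in S would contradict minimality: the two
     neighbourhood layers sep of the block of vertices with two prescribed
     entries form an h-cut (h <= n - 3) smaller than a sub-star. *)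

Lemma connect_hom (T T' : finType) (e : rel T) (e' : rel T') (f : T -> T') x y :
  (forall u v, e u v -> e' (f u) (f v)) -> connect e x y -> connect e' (f x) (f y).
Proof.
move=> fe /connectP [s ps ->]; elim: s x ps => //= z s IH x /andP [exz ps].
exact: connect_trans (connect1 (fe _ _ exz)) (IH _ ps).
Qed.

Section GraphFacts.
Variables (T : finType) (e : rel T).

Lemma connect_invariant (A : {set T}) x y :
  (forall u v, u \in A -> e u v -> v \in A) -> connect e x y -> x \in A -> y \in A.
Proof.
move=> clA /connectP [s ps ->]; elim: s x ps => //= z s IH x /andP [exz ps] xA.
exact: IH ps (clA _ _ xA exz).
Qed.

Lemma kappa_le h B : hcut e setT B h -> kappa_s e h <= #|B|.
Proof.
move=> hB; rewrite /kappa_s; case: pickP => [S0 hS0|/(_ B)]; last by rewrite hB.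
by case: arg_minnP => // S _ /(_ B hB).
Qed.

Lemma kappa_min h S : min_hcut e S h -> kappa_s e h = #|S|.
Proof.
case=> hS mS; apply/eqP; rewrite eqn_leq kappa_le //.
rewrite /kappa_s; case: pickP => [S0 hS0|/(_ S)]; last by rewrite hS.
by case: arg_minnP => // S1 hS1 _; apply: mS.
Qed.

Lemma card_fibres (I : finType) (f : T -> I) (A : {set T}) :
  #|A| = \sum_(i : I) #|A :&: [set x | f x == i]|.
Proof.
rewrite -sum1_card (partition_big f xpredT) //=.
by apply: eq_bigr => i _; rewrite -sum1_card; apply: eq_bigl => x; rewrite !inE.
Qed.

Lemma component_cut (S X U : {set T}) h :
  hcut e setT S h -> component_of e (~: S) X ->
  (forall v, v \in U -> #|[set y | e v y & y \notin U]| <= 1) ->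
  X :&: U != set0 -> ~: (S :|: X) :&: U != set0 ->
  hcut e U (S :&: U) (h - 1).
Proof.
case/and3P=> _ _ /forallP degS [x1 x1S ->] out1.
case/set0Pn=> x /setIP [/[!inE] /andP [xS cx] xU].
case/set0Pn=> y /setIP [/[!inE] /norP [yS]]; rewrite yS /= => yX yU.
have inUS z : (z \in U :\: (S :&: U)) = (z \notin S) && (z \in U).
  by rewrite !inE; case: (z \in U); rewrite ?andbT ?andbF.
apply/and3P; split; first exact: subsetIr.
- apply/existsP; exists x; apply/existsP; exists y; rewrite !inUS xS yS xU yU /=.
  apply: contra yX => cxy; apply: connect_trans cx (connect_sub _ cxy).
  move=> u v /and3P [uA vA uv].
  apply: connect1; rewrite /restr /= !inE uv andbT.
  by move: uA vA; rewrite !inUS => /andP [-> _] /andP [-> _].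
apply/forallP => v; apply/implyP; rewrite inUS => /andP [vS vU].
have := degS v; rewrite !inE vS /= => hv; rewrite leq_subLR.
apply: leq_trans hv _; rewrite /deg_in addnC.
apply: (leq_trans _ (leq_add (leqnn _) (out1 v vU))).
apply: (leq_trans _ (leq_card_setU _ _)); apply: subset_leq_card.
apply/subsetP => z; rewrite !inE andbT => /andP [zS vz].
by rewrite (negbTE zS) vz; case: (z \in U).
Qed.
End GraphFacts.

Lemma kappa_le_iso (T T' : finType) (e : rel T) (e' : rel T') (f : T' -> T)
    (U A : {set T}) h :
  injective f -> f @: setT = U -> (forall z w, e' z w = e (f z) (f w)) ->
  hcut e U A h -> kappa_s e' h <= #|A|.
Proof.
move=> finj imf frel /and3P [_ /existsP [x /existsP [y /and3P [xU yU nxy]]]].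
move=> /forallP degA.
have inUA z : (f z \in U :\: A) = (z \in setT :\: f @^-1: A).
  by rewrite -imf !inE (imset_f f (in_setT z)).
have onto u : u \in U :\: A -> exists2 z, z \in setT :\: f @^-1: A & f z = u.
  move=> uUA; have /imsetP [z _ uz] : u \in f @: setT by rewrite imf; case/setDP: uUA.
  by exists z; rewrite // -inUA -uz.
have hom u v : restr e' (setT :\: f @^-1: A) u v -> restr e (U :\: A) (f u) (f v).
  by case/and3P=> uB vB uv; rewrite /restr /= !inUA uB vB -frel.
apply: leq_trans (kappa_le (B := f @^-1: A) _) _; last first.
  rewrite -(card_imset _ finj); apply: subset_leq_card.
  by apply/subsetP => _ /imsetP [z /[!inE] zA ->].
apply/and3P; split; first exact: subsetT.
- have [a aB fa] := onto x xU; have [b bB fb] := onto y yU.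
  apply/existsP; exists a; apply/existsP; exists b; rewrite aB bB /=.
  by apply: contra nxy; rewrite -fa -fb; apply: connect_hom hom.
apply/forallP => z; apply/implyP => zB.
have := degA (f z); rewrite inUA zB => /leq_trans; apply.
rewrite /deg_in; apply: leq_trans (leq_imset_card f _); apply: subset_leq_card.
apply/subsetP => u; rewrite in_set => /andP [uUA zu]; have [w wB uw] := onto u uUA.
by apply/imsetP; exists w => //; rewrite inE wB frel uw.
Qed.

Section StarGraph.
Variables (n k : nat) (x0 : 'I_n).
Implicit Types (p q : kperm n k) (c : 'I_n).

(* Entry j (0-based) of a vertex, x0 being a default for j >= k. *)
Definition ent p (j : nat) : 'I_n := nth x0 (val p) j.

Lemma nth_kseq p j : j < k -> nth 0 (kseq p) j = ent p j.
Proof. by move=> jk; rewrite /kseq (nth_map x0) ?size_tuple. Qed.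

Lemma kperm_eq p q : (forall j, j < k -> ent p j = ent q j) -> p = q.
Proof.
move=> epq; do 2 apply: val_inj.
by apply: (eq_from_nth (x0 := x0)); rewrite ?size_tuple // => j; apply: epq.
Qed.

Lemma ent_eq p i j : i < k -> j < k -> (ent p i == ent p j) = (i == j).
Proof. by move=> ik jk; rewrite nth_uniq ?size_tuple ?(valP p). Qed.

Lemma ent_inj p i j : i < k -> j < k -> ent p i = ent p j -> i = j.
Proof. by move=> ik jk /eqP; rewrite ent_eq // => /eqP. Qed.

Lemma ent_in p j : j < k -> ent p j \in (val p : seq _).
Proof. by move=> jk; rewrite /ent mem_nth ?size_tuple. Qed.

Lemma ent_index p c : c \in (val p : seq _) -> exists2 i, i < k & ent p i = c.
Proof.
move=> cp; exists (index c (val p)); last by rewrite /ent nth_index.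
by move: cp; rewrite -index_mem size_tuple.
Qed.

Definition vp (s : {perm 'I_n}) p : kperm n k :=
  exist _ (map_tuple s (val p)) (etrans (map_inj_uniq (@perm_inj _ s) _) (valP p)).

Lemma ent_vp s p j : j < k -> ent (vp s p) j = s (ent p j).
Proof. by move=> jk; rewrite /ent /= (nth_map x0) ?size_tuple. Qed.

Lemma vpM s1 s2 p : vp s1 (vp s2 p) = vp (s2 * s1) p.
Proof. by do 2 apply: val_inj; rewrite /= -map_comp; apply: eq_map => x; rewrite permM. Qed.

Lemma vp1 p : vp 1 p = p.
Proof. by do 2 apply: val_inj; rewrite /= -[RHS]map_id; apply: eq_map => x; rewrite perm1. Qed.

(* nbr c p: the vertex obtained from p by making c its first entry (swapping
   it with an entry of p, or replacing p_0 by it); star_relP below shows that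
   the neighbours of p are exactly the nbr c p with c != p_0. *)
Definition nbr c p : kperm n k := vp (tperm (ent p 0) c) p.

Lemma ent_nbr c p j : j < k ->
  ent (nbr c p) j = if j == 0 then c else if ent p j == c then ent p 0 else ent p j.
Proof.
move=> jk; rewrite ent_vp //; case: eqP => [-> | /eqP j0]; first exact: tpermL.
have pj0 : ent p j != ent p 0 := contra_neq (ent_inj jk (leq_ltn_trans (leq0n j) jk)) j0.
by case: eqP => [-> | /eqP pjc]; [rewrite tpermR | rewrite tpermD // eq_sym].
Qed.

Lemma swap_adjP p q :
  reflect (exists2 c, (c \in (val p : seq _)) && (c != ent p 0) & q = nbr c p)
          (swap_adj k (kseq p) (kseq q)).
Proof.
apply: (iffP existsP) => [[i /andP [i0 /forallP eq_q]] | [c /andP [cp cp0] ->]].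
- have ik := ltn_ord i; have k0 : 0 < k := leq_ltn_trans (leq0n _) ik.
  exists (ent p i); first by rewrite ent_in //= ent_eq // -lt0n.
  apply: kperm_eq => j jk; rewrite ent_nbr // ent_eq //.
  have := eqP (eq_q (Ordinal jk)); rewrite /= !nth_kseq //; last first.
    by case: ifP => //; case: ifP.
  move/val_inj ->; rewrite -(inj_eq val_inj) /=.
  by case: (eqVneq j 0) => // j0; case: (eqVneq j i).
- have [i ik pi] := ent_index cp; have k0 : 0 < k := leq_ltn_trans (leq0n _) ik.
  have i0 : 0 < i by rewrite lt0n; apply: contra_neq cp0 => i0; rewrite -pi i0.
  exists (Ordinal ik); rewrite i0; apply/forallP => j /=.
  rewrite !nth_kseq //; last by case: ifP => //; case: ifP.
  rewrite ent_nbr // -pi ent_eq // -(inj_eq val_inj) /=.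
  by do 2 case: ifP => //= _.
Qed.

Lemma ext_adjP p q : 0 < k ->
  reflect (exists2 c, c \notin (val p : seq _) & q = nbr c p)
          (ext_adj (kseq p) (kseq q)).
Proof.
move=> k0; have memk r c : (val c \in kseq r) = (c \in (val r : seq _)).
  by rewrite mem_map //; exact: val_inj.
have headk r : head 0 (kseq r) = ent r 0 by rewrite -nth0 nth_kseq.
apply: (iffP andP) => [[/eqP eq_tail] | [c cp ->]].
- rewrite headk memk => q0p; exists (ent q 0) => //.
  apply: kperm_eq => j jk; rewrite ent_nbr //; case: (eqVneq j 0) => [-> //| j0].
  have := congr1 (nth 0 ^~ j.-1) eq_tail; rewrite !nth_behead prednK ?lt0n //.
  rewrite !nth_kseq // => /val_inj ->.
  by rewrite (negbTE (contraNneq _ q0p)) // => <-; rewrite ent_in.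
split; last by rewrite headk memk ent_nbr.
apply/eqP; apply: (eq_from_nth (x0 := 0)); first by rewrite !size_behead !size_map !size_tuple.
rewrite size_behead size_map size_tuple => j jk; rewrite !nth_behead.
have j1k : j.+1 < k by rewrite -(ltn_predK k0) ltnS.
rewrite !nth_kseq // ent_nbr //=.
by rewrite (negbTE (contraNneq _ cp)) // => <-; rewrite ent_in.
Qed.

Lemma star_relP p q : 0 < k ->
  reflect (exists2 c, c != ent p 0 & q = nbr c p) (star_rel p q).
Proof.
move=> k0; apply: (iffP orP) => [[] | [c cp0 ->]].
- by case/swap_adjP=> c /andP [_ cp0] ->; exists c.
- case/(ext_adjP _ _ k0)=> c cp ->.
  by exists c => //; apply: contraNneq cp => ->; rewrite ent_in.
case: (boolP (c \in (val p : seq _))) => cp.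
  by left; apply/swap_adjP; exists c; rewrite ?cp.
by right; apply/ext_adjP => //; exists c.
Qed.

End StarGraph.

Lemma ent_default n k (x0 x1 : 'I_n) (p : kperm n k) j :
  j < k -> ent x0 p j = ent x1 p j.
Proof. by move=> jk; apply: set_nth_default; rewrite size_tuple. Qed.

Lemma kperm_of_seq n k (z : 'I_n) (s : seq nat) :
  size s = k -> all (fun x => x < n) s -> uniq s -> exists p : kperm n k, kseq p = s.
Proof.
move=> ss /allP sn su; have ts : size (map (insubd z) s) == k by rewrite size_map ss.
have insK : {in s, cancel (insubd z) val} by move=> x /sn xn; rewrite insubdK.
have tu : uniq (Tuple ts) by rewrite /= (map_inj_in_uniq (can_in_inj insK)).
by exists (exist _ (Tuple ts) tu); rewrite /kseq /= -map_comp map_id_in.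
Qed.

Section Lift.
Variables (n : nat) (i0 : 'I_n).

Definition lft (x : 'I_(n - 1)) : 'I_n := insubd i0 (bump i0 x).

Lemma lftE x : val (lft x) = bump i0 x.
Proof.
by rewrite insubdK // /bump; have := ltn_ord x; have := ltn_ord i0; case: leqP => _ /=; lia.
Qed.

Lemma lft_neq x : lft x != i0.
Proof. by rewrite -(inj_eq val_inj) lftE eq_sym neq_bump. Qed.

Lemma lft_inj : injective lft.
Proof.
by move=> x y /(congr1 val); rewrite !lftE => /(congr1 (unbump i0)); rewrite !bumpK => /val_inj.
Qed.

Lemma lft_onto c : c != i0 -> exists x, lft x = c.
Proof.
rewrite -(inj_eq val_inj) => ci; have cn : unbump i0 c < n - 1.
  by move: ci; have := ltn_ord i0; have := ltn_ord c; rewrite /unbump; case: ltnP => /=; lia.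
by exists (Ordinal cn); apply: val_inj; rewrite lftE /= unbumpK // inE.
Qed.

Lemma lft_tperm (u v w : 'I_(n - 1)) : lft (tperm u v w) = tperm (lft u) (lft v) (lft w).
Proof.
case: (tpermP u v w) => [-> | -> | wu wv]; rewrite ?tpermL ?tpermR //.
by rewrite tpermD // (inj_eq lft_inj) eq_sym; apply/eqP.
Qed.

End Lift.

Section SubStarIso.
Variables (n k P : nat) (i0 : 'I_n) (y0 : 'I_(n - 1)).
Hypotheses (P0 : 0 < P) (Pk : P < k).
Local Notation lft := (lft i0).

(* Positions: the small vertex's entry gi j sits at position j != P of the
   large one; hi is the inverse position map. *)
Definition gi (j : nat) := if j < P then j else j.-1.
Definition hi (j : nat) := if j < P then j else j.+1.

Lemma gi_lt j : j < k -> j != P -> gi j < k - 1.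
Proof. by rewrite /gi => jk /eqP jP; case: ifP => jlt; lia. Qed.

Lemma hi_lt j : j < k - 1 -> hi j < k.
Proof. by rewrite /hi => jk; case: ifP => jlt; lia. Qed.

Lemma hi_neq j : hi j != P.
Proof. by rewrite /hi; case: ltnP => H; apply/eqP; lia. Qed.

Lemma gi_hi j : gi (hi j) = j.
Proof. by rewrite /gi /hi; case: (ltnP j P) => jP /=; case: ifP => jP'; lia. Qed.

Lemma hi_gi j : j != P -> hi (gi j) = j.
Proof. by move/eqP; rewrite /gi /hi; case: (ltnP j P) => jP /= ?; case: ifP => jP'; lia. Qed.

(* psi a: insert the value i0 at position P of a and relabel the other values
   by lft. This is the isomorphism S_{n-1,k-1} ~ S^{P+1:i0}_{n,k}. *)
Definition psi_seq (a : kperm (n - 1) (k - 1)) : seq 'I_n :=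
  mkseq (fun j => if j == P then i0 else lft (ent y0 a (gi j))) k.

Lemma psi_seq_size a : size (psi_seq a) == k.
Proof. by rewrite size_mkseq. Qed.

Lemma psi_seq_uniq a : uniq (psi_seq a).
Proof.
apply/mkseq_uniqP => i j; rewrite !inE => ik jk /=.
case: (eqVneq i P) => [->|iP]; case: (eqVneq j P) => [->|jP] //.
- by move/esym/eqP; rewrite (negbTE (lft_neq i0 _)).
- by move/eqP; rewrite (negbTE (lft_neq i0 _)).
by move/lft_inj/ent_inj => /(_ (gi_lt ik iP) (gi_lt jk jP)) /(congr1 hi); rewrite !hi_gi.
Qed.

Definition psi a : kperm n k := exist _ (Tuple (psi_seq_size a)) (psi_seq_uniq a).

Lemma psi_ent a j : j < k ->
  ent i0 (psi a) j = if j == P then i0 else lft (ent y0 a (gi j)).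
Proof. by move=> jk; rewrite /ent nth_mkseq. Qed.

Lemma psi_P a : ent i0 (psi a) P = i0.
Proof. by rewrite psi_ent // eqxx. Qed.

Lemma psi_0 a : ent i0 (psi a) 0 = lft (ent y0 a 0).
Proof. by rewrite psi_ent ?(leq_ltn_trans (leq0n P)) // eq_sym (gtn_eqF P0) /gi P0. Qed.

Lemma psi_inj : injective psi.
Proof.
move=> a b eab; apply: (kperm_eq (x0 := y0)) => j jk.
have := congr1 (ent i0 ^~ (hi j)) eab; rewrite /= !psi_ent ?hi_lt //.
by rewrite (negbTE (hi_neq j)) gi_hi => /lft_inj.
Qed.

Lemma psi_image (x0 : 'I_n) : psi @: setT = [set p | ent x0 p P == i0].
Proof.
apply/setP => p; rewrite inE (ent_default x0 i0) //.
apply/imsetP/eqP => [[a _ ->] | pP]; first exact: psi_P.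
have pj j : j < k - 1 -> ent i0 p (hi j) != i0.
  by move=> jk; rewrite -[X in _ != X]pP ent_eq ?hi_lt ?hi_neq.
pose s := mkseq (fun j => unbump i0 (ent i0 p (hi j))) (k - 1).
have [a sa] : exists a : kperm (n - 1) (k - 1), kseq a = s.
  apply: (kperm_of_seq y0); first exact: size_mkseq.
    apply/allP => _ /mapP [j /[!mem_iota] /andP [_ jk] ->].
    by have [x <-] := lft_onto (pj j jk); rewrite lftE bumpK.
  apply/mkseq_uniqP => i j /[!inE] ik jk /(congr1 (bump i0)).
  rewrite !unbumpK ?inE ?pj // => /val_inj/ent_inj.
  by move=> /(_ (hi_lt ik) (hi_lt jk)) /(congr1 gi); rewrite !gi_hi.
exists a => //; apply: (kperm_eq (x0 := i0)) => j jk; rewrite psi_ent //.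
case: (eqVneq j P) => [-> // | jP]; apply: val_inj.
rewrite lftE -nth_kseq ?gi_lt // sa nth_mkseq ?gi_lt // hi_gi // unbumpK // inE.
by rewrite -{1}(hi_gi jP) pj ?gi_lt.
Qed.

Lemma psi_vp (u v : 'I_(n - 1)) a :
  psi (vp (tperm u v) a) = vp (tperm (lft u) (lft v)) (psi a).
Proof.
apply: (kperm_eq (x0 := i0)) => j jk; rewrite ent_vp // !psi_ent //.
case: (eqVneq j P) => [_ | jP]; last by rewrite ent_vp ?gi_lt // lft_tperm.
by rewrite tpermD // lft_neq.
Qed.

Lemma psi_nbr c a : psi (nbr y0 c a) = nbr i0 (lft c) (psi a).
Proof. by rewrite /nbr psi_vp psi_0. Qed.

Lemma psi_rel a b : star_rel (psi a) (psi b) = star_rel a b.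
Proof.
have k0 : 0 < k by lia.
have k1 : 0 < k - 1 by lia.
apply/(star_relP i0 _ _ k0)/(star_relP y0 _ _ k1) => [[c] | [c ca0 ->]]; last first.
  by exists (lft c); rewrite ?psi_nbr // psi_0 (inj_eq (@lft_inj _ i0)).
rewrite psi_0 => ca0 eb.
have ci0 : c != i0.
  apply/eqP => ci; have := psi_P b; rewrite eb ent_nbr // (gtn_eqF P0) psi_P ci eqxx.
  by rewrite psi_0 => /eqP; rewrite (negbTE (lft_neq i0 _)).
have [d cd] := lft_onto ci0; exists d; first by apply: contra_neq ca0 => <-; rewrite cd.
by apply: psi_inj; rewrite psi_nbr cd.
Qed.

End SubStarIso.

Lemma card_compl3 n (a b c : 'I_n) : n - 3 <= #|~: [set a; b; c]|.
Proof.
have le3 : #|[set a; b; c]| <= 3.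
  apply: leq_trans (card_size [:: a; b; c]); apply: subset_leq_card.
  by apply/subsetP => z; rewrite !inE -orbA.
by have := cardsC [set a; b; c]; rewrite card_ord; lia.
Qed.

Lemma fresh_value n (a b c : 'I_n) :
  3 < n -> exists w : 'I_n, [&& w != a, w != b & w != c].
Proof.
move=> n3; have /card_gt0P [w] : 0 < #|~: [set a; b; c]| by have := card_compl3 a b c; lia.
by rewrite !inE !negb_or -andbA; exists w.
Qed.

Section StarCuts.
Variables (n k P : nat) (x0 : 'I_n).
Hypotheses (P0 : 0 < P) (Pk : P < k).
Local Notation e := (@star_rel n k).
Local Notation ent := (ent x0).
Implicit Types (p q r v : kperm n k).

Lemma k_gt0 : 0 < k. Proof. exact: leq_ltn_trans (leq0n P) Pk. Qed.

Definition subs (i : 'I_n) : {set kperm n k} := [set p | ent p P == i].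

Lemma card_subs (A : {set kperm n k}) : #|A| = \sum_(i : 'I_n) #|A :&: subs i|.
Proof. exact: card_fibres. Qed.

Lemma kappa_le_subs (y0 : 'I_(n - 1)) i (A : {set kperm n k}) h :
  hcut e (subs i) A h -> kappa_s (@star_rel (n - 1) (k - 1)) h <= #|A|.
Proof.
apply: kappa_le_iso (@psi_inj _ _ _ i y0 P0 Pk) (psi_image i y0 P0 Pk x0) _.
by move=> a b; rewrite psi_rel.
Qed.

Lemma ent_nbr_pos c p j : j < k -> j != 0 ->
  ent (nbr x0 c p) j = if ent p j == c then ent p 0 else ent p j.
Proof. by move=> jk j0; rewrite ent_nbr // (negbTE j0). Qed.

Lemma subs_out1 i v : v \in subs i -> #|[set y | e v y & y \notin subs i]| <= 1.
Proof.
rewrite inE => /eqP vi; apply: leq_trans (_ : _ <= #|[set nbr x0 i v]|) _.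
  apply/subset_leq_card/subsetP => y /[!inE] /andP [/(star_relP x0 _ _ k_gt0) [c _ ->]].
  by rewrite ent_nbr_pos // ?gtn_eqF // vi; case: (eqVneq i c) => [<- | _]; rewrite ?eqxx.
by rewrite cards1.
Qed.

Lemma subs_nonempty i : k <= n -> exists r, ent r P = i.
Proof.
move=> kn; have [p _] : exists p : kperm n k, kseq p = iota 0 k.
  apply: (kperm_of_seq x0); rewrite ?size_iota ?iota_uniq //.
  by apply/allP => j /[!mem_iota] /andP [_ jk]; apply: leq_trans kn.
by exists (vp (tperm (ent p P) i) p); rewrite ent_vp // tpermL.
Qed.

Lemma nbr_deg (A : {set kperm n k}) v (C : {set 'I_n}) :
  (forall c, c \in C -> (c != ent v 0) && (nbr x0 c v \in A)) -> #|C| <= deg_in e A v.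
Proof.
move=> CA; have nbr_inj : injective (nbr x0 ^~ v).
  by move=> c1 c2 /(congr1 (ent^~ 0)); rewrite !ent_nbr ?k_gt0.
rewrite -(card_imset C nbr_inj); apply: subset_leq_card.
apply/subsetP => _ /imsetP [c /CA /andP [cv cA] ->]; rewrite inE cA.
by apply/(star_relP x0 _ _ k_gt0); exists c.
Qed.

Section SeparatingCut.
Variables (Q : nat) (r : kperm n k).
Hypotheses (Q0 : 0 < Q) (Qk : Q < k) (QP : Q != P).

(* The block of vertices agreeing with the root r at positions P and Q, and
   the set sep = sep1 :|: sep2 through which every edge leaves it. *)
Definition blk := [set p : kperm n k | (ent p P == ent r P) && (ent p Q == ent r Q)].
Definition sep1 := [set p : kperm n k | (ent p 0 == ent r P) && (ent p Q == ent r Q)].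
Definition sep2 := [set p : kperm n k | (ent p 0 == ent r Q) && (ent p P == ent r P)].
Definition sep := sep1 :|: sep2.

Lemma r_neq : [&& ent r Q != ent r P, ent r 0 != ent r P & ent r 0 != ent r Q].
Proof. by rewrite !ent_eq ?k_gt0 // QP !(eq_sym 0) (gtn_eqF P0) (gtn_eqF Q0). Qed.

Lemma blk_closed p v : p \in blk -> e p v -> v \notin sep -> v \in blk.
Proof.
case/and3P: r_neq => bi _ _.
rewrite !inE => /andP [/eqP pP /eqP pQ] /(star_relP x0 _ _ k_gt0) [c _ ->].
rewrite !ent_nbr ?k_gt0 // eqxx (gtn_eqF P0) (gtn_eqF Q0) pP pQ.
case: (eqVneq (ent r P) c) => [<- | ic]; first by rewrite (negbTE bi) !eqxx.
by case: (eqVneq (ent r Q) c); rewrite !eqxx ?orbT.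
Qed.

Lemma sep_hcut h : h <= n - 3 -> 3 < n -> hcut e setT sep h.
Proof.
move=> hn n3; case/and3P: r_neq => bi r0i r0b.
apply/and3P; split; first exact: subsetT.
- have [w /and3P [wi wb wr0]] := fresh_value (ent r P) (ent r Q) (ent r 0) n3.
  pose y := vp (tperm (ent r P) w) r.
  have y0 : ent y 0 = ent r 0 by rewrite ent_vp ?k_gt0 // tpermD // eq_sym.
  have yP : ent y P = w by rewrite ent_vp // tpermL.
  apply/existsP; exists r; apply/existsP; exists y.
  rewrite !inE y0 (negbTE r0i) (negbTE r0b) /=.
  have rblk : r \in blk by rewrite inE !eqxx.
  have blk_inv u v : u \in blk -> restr e (setT :\: sep) u v -> v \in blk.
    by move=> ublk /and3P [_ /setDP [_ vsep] uv]; apply: blk_closed ublk uv vsep.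
  apply/negP => /(connect_invariant blk_inv) /(_ rblk).
  by rewrite inE yP (negbTE wi).
apply/forallP => v; apply/implyP => _.
apply: leq_trans hn (leq_trans (card_compl3 (ent v 0) (ent r P) (ent r Q)) _).
apply: nbr_deg => c /[!inE] /norP [/norP [cv0 ci] cb]; rewrite cv0 /=.
by rewrite !ent_nbr ?k_gt0 // eqxx (negbTE ci) (negbTE cb).
Qed.

Lemma sep_small : 3 < n -> #|sep| < #|subs (ent r P)|.
Proof.
move=> n3; case/and3P: r_neq => bi r0i r0b.
pose swp p := nbr x0 (ent p P) p.
have swpK : involutive swp.
  move=> p; rewrite /swp /nbr !ent_vp ?k_gt0 // tpermL tpermR.
  by rewrite vpM tpermC tperm2 vp1.
have sep1_blk : #|sep1| <= #|blk|.
  rewrite -(card_imset sep1 (can_inj swpK)); apply/subset_leq_card/subsetP.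
  move=> _ /imsetP [p /[!inE] /andP [/eqP p0 /eqP pQ] ->]; rewrite /swp.
  rewrite !ent_nbr ?k_gt0 // eqxx (gtn_eqF P0) (gtn_eqF Q0) ent_eq // (negbTE QP) p0 pQ.
  by rewrite !eqxx.
have card_blk_sep2 : #|blk :|: sep2| = #|blk| + #|sep2|.
  rewrite cardsU (_ : blk :&: sep2 = set0) ?cards0 ?subn0 //; apply/setP => p.
  rewrite !inE; apply/negP => /andP [/andP [_ /eqP pQ] /andP [/eqP p0 _]].
  by move: (ent_eq x0 p Qk k_gt0); rewrite pQ p0 eqxx (gtn_eqF Q0).
have [w /and3P [wi wb wr0]] := fresh_value (ent r P) (ent r Q) (ent r 0) n3.
pose z := vp (tperm (ent r Q) w) r.
have zP : ent z P = ent r P by rewrite ent_vp // tpermD // eq_sym.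
have zQ : ent z Q = w by rewrite ent_vp // tpermL.
have z0 : ent z 0 = ent r 0 by rewrite ent_vp ?k_gt0 // tpermD // eq_sym.
have znot : z \notin blk :|: sep2 by rewrite !inE zQ z0 (negbTE wb) (negbTE r0b) andbF.
apply: leq_ltn_trans (leq_card_setU _ _) _.
apply: leq_ltn_trans (leq_add sep1_blk (leqnn _)) _.
rewrite -card_blk_sep2.
apply: leq_trans (_ : #|z |: (blk :|: sep2)| <= _); first by rewrite cardsU1 znot.
apply/subset_leq_card/subsetP => p; rewrite !inE.
by case/or3P => [/eqP -> | /andP [-> _] | /andP [_ ->]] //; rewrite zP.
Qed.

End SeparatingCut.

(* For 3 <= k < n and h <= n - 3 no sub-star lies inside a minimum h-cut:
   the separating cut of a root in it is an h-cut smaller than the sub-star. *)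
Lemma subs_not_in_min_cut S h i : 2 < k -> k < n -> h <= n - 3 ->
  min_hcut e S h -> ~~ (subs i \subset S).
Proof.
move=> k3 kn hn [_ minS]; have n3 : 3 < n by lia.
pose Q := if P == 1 then 2 else 1.
have Q0 : 0 < Q by rewrite /Q; case: (P =P 1).
have Qk : Q < k by rewrite /Q; case: (P =P 1) => ?; lia.
have QP : Q != P by rewrite /Q; case: (P =P 1) => ?; apply/eqP; lia.
have [r <-] := subs_nonempty i (ltnW kn).
have small := sep_small r Q0 Qk QP n3; have cut := minS _ (sep_hcut r Q0 Qk QP hn n3).
by apply/negP => /subset_leq_card /leq_trans /(_ cut) /leq_ltn_trans /(_ small); rewrite ltnn.
Qed.

End StarCuts.

Lemma sub_starE n k t (x0 : 'I_n) i : 0 < t <= k -> sub_star k t i = subs k t.-1 x0 i.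
Proof.
case/andP=> t0 tk; apply/setP => p.
by rewrite !inE (nth_kseq x0) ?prednK // (inj_eq val_inj).
Qed.

Lemma subset_cut (T : finType) (S X U : {set T}) :
  X :&: U = set0 -> ~: (S :|: X) :&: U = set0 -> U \subset S.
Proof.
move=> XU0 YU0; apply/subsetP => p pU; apply: contraT => pS.
have : p \in (X :&: U) :|: (~: (S :|: X) :&: U).
  by rewrite !inE pU (negbTE pS); case: (p \in X).
by rewrite XU0 YU0 setU0 inE.
Qed.

Theorem lemma3p3 (n k h t : nat) (S X : {set kperm n k}) :
  3 <= k -> k <= n - 1 -> 1 <= h -> h <= n - k ->
  min_hcut (@star_rel n k) S h ->
  component_of (@star_rel n k) (~: S) X ->
  2 <= t <= k ->
  let Y := ~: (S :|: X) in
  let Xi := fun i => X :&: sub_star k t i in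
  let Yi := fun i => Y :&: sub_star k t i in
  let Si := fun i => S :&: sub_star k t i in
  let J := [set i : 'I_n | Xi i != set0] in
  let J' := [set i in J | Yi i != set0] in
  let T := [set i : 'I_n | Yi i != set0] in
  [/\ (forall i, i \in J' -> hcut (@star_rel n k) (sub_star k t i) (Si i) (h - 1)),
      #|J'| * kappa_s (@star_rel (n - 1) (k - 1)) (h - 1)
        <= kappa_s (@star_rel n k) h
    & J :|: T = [set: 'I_n]].
Proof.
move=> k3 kn h1 hn minS compX t2k Y Xi Yi Si J J' T.
have P0 : 0 < t.-1 by lia.
have Pk : t.-1 < k by lia.
have [n0 n1] : 0 < n /\ 0 < n - 1 by lia.
pose x0 : 'I_n := Ordinal n0; pose y0 : 'I_(n - 1) := Ordinal n1.
have subE i : sub_star k t i = subs k t.-1 x0 i by apply: sub_starE; lia.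
have cutJ' i : i \in J' -> hcut (@star_rel n k) (sub_star k t i) (Si i) (h - 1).
  rewrite !inE /Si /Xi /Yi !subE => /andP [XU YU].
  exact: component_cut minS.1 compX (@subs_out1 _ _ _ x0 P0 Pk i) XU YU.
split; first exact: cutJ'.
- rewrite (kappa_min minS) (card_subs t.-1 x0 S) -sum_nat_const.
  rewrite [X in _ <= X](bigID (mem J')) /=; apply: (leq_trans _ (leq_addr _ _)).
  by apply: leq_sum => i /cutJ'; rewrite /Si subE; exact: (kappa_le_subs P0 Pk y0).
- have [kn' hn'] : k < n /\ h <= n - 3 by lia.
  apply/setP => i; rewrite !inE /Xi /Yi -negb_and.
  apply/negP => /andP [/eqP XU /eqP YU].
  case/negP: (subs_not_in_min_cut x0 P0 Pk i k3 kn' hn' minS).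
  by rewrite -subE; apply: subset_cut XU YU.
Qed.
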